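(* Let $n\ge 4$ be even. Let the multiplicative group $\Gamma=\mathbb R_{>0}^n$ act on $\mathbb R_{>0}^{E_n}$ by $\lambda\cdot x=(\lambda_i\lambda_j x_{\{i,j\}})_{\{i,j\}\in E_n}$ for $\lambda\in\Gamma$, $x\in\mathbb R_{>0}^{E_n}$. Then every $\Gamma$-invariant subset of $\mathbb R_{>0}^{E_n}$ is fiber-invariant for the map $\varphi:\mathbb R_{>0}^{E_n}\to\mathbb R_{>0}^{\mathcal M_n}$, $\varphi(x)=(x_M)_{M\in\mathcal M_n}$, where $x_M=\prod_{e\in M}x_e$.
   Context: $E_n$ denotes the set of edges of the complete graph on vertex set $[n]=\{1,\dots,n\}$ (i.e. the 2-element subsets of $[n]$), and $\mathcal M_n$ denotes the set of perfect matchings of this complete graph. For a map $f:X\to Y$, a subset $D\subseteq X$ is fiber-invariant for $f$ if for every $y\in f(D)$ the whole fiber $f^{-1}(y)$ is contained in $D$. *)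

From HB Require Import structures.
From mathcomp Require Import all_boot all_order all_algebra.
From mathcomp Require Import reals.
Set Implicit Arguments. Unset Strict Implicit. Unset Printing Implicit Defensive.
Import Order.TTheory GRing.Theory Num.Theory.
Local Open Scope ring_scope.

Definition edge (n : nat) := {e : {set 'I_n} | #|e| == 2%N}.

Definition perfect_matching (n : nat) (M : {set edge n}) : bool :=
  [forall v : 'I_n, #|[set e in M | v \in val e]| == 1%N].

Definition posvec (R : realType) (T : finType) (x : {ffun T -> R}) : Prop :=
  forall t, 0 < x t.

Definition gact (R : realType) (n : nat) (lam : {ffun 'I_n -> R})
  (x : {ffun edge n -> R}) : {ffun edge n -> R} :=
  [ffun e : edge n => (\prod_(i in val e) lam i) * x e].

Definition xM (R : realType) (n : nat) (x : {ffun edge n -> R})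
  (M : {set edge n}) : R := \prod_(e in M) x e.

Definition gamma_invariant (R : realType) (n : nat)
  (D : {ffun edge n -> R} -> Prop) : Prop :=
  forall lam : {ffun 'I_n -> R}, posvec lam ->
  forall x, D x -> D (gact lam x).

(* D is fiber-invariant for phi : R_{>0}^{E_n} -> R_{>0}^{M_n}, phi x = (x_M)_M:
   every y in phi(D) has its whole fiber (within R_{>0}^{E_n}) inside D. *)
Definition phi_fiber_invariant (R : realType) (n : nat)
  (D : {ffun edge n -> R} -> Prop) : Prop :=
  forall x x' : {ffun edge n -> R}, D x -> posvec x' ->
  (forall M : {set edge n}, perfect_matching M -> xM x' M = xM x M) ->
  D x'.

From HB Require Import structures.
From mathcomp Require Import all_boot all_order all_algebra.
From mathcomp Require Import reals.
From mathcomp Require Import perm ring zify.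
Set Implicit Arguments. Unset Strict Implicit. Unset Printing Implicit Defensive.
Import Order.TTheory GRing.Theory Num.Theory.
Local Open Scope ring_scope.

(* If x and x' have the same matching monomials, the ratio r = x' / x satisfies
   r_M = 1 for every perfect matching M.  As n is even, two disjoint pairs {a,b},
   {c,d} extend to a perfect matching, and trading them for {a,c}, {b,d} gives
   another one; hence r_ab r_cd = r_ac r_bd for distinct a, b, c, d.  A positive
   symmetric weight with this four-point property has rank one, r_ab = l_a l_b,
   where l_v^2 = r_vu r_vu' / r_uu' for any two distinct u, u' other than v (this
   needs n >= 3).  So x' = l . x is in the Gamma-orbit of x. *)

Definition fpf_involution (T : eqType) (p : T -> T) :=
  (forall v, p (p v) = v) /\ (forall v, p v != v).

Lemma fpf_involution_conj (T : eqType) (s s' p : T -> T) :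
  cancel s s' -> cancel s' s -> fpf_involution p -> fpf_involution (s \o p \o s').
Proof.
move=> sK s'K [pK p_neq]; split=> v /=; first by rewrite sK pK s'K.
apply/eqP => h; move/eqP: (p_neq (s' v)); apply.
by rewrite -[in RHS]h sK.
Qed.

Lemma fpf_involution_redirect (T : finType) (p : T -> T) (x y : T) :
  fpf_involution p -> x != y ->
  exists2 p', fpf_involution p' & p' x = y /\
    forall z, z != y -> z != p x -> p z != y -> p z != p x -> p' z = p z.
Proof.
move=> p_inv xy; have [_ p_neq] := p_inv.
have s_inv := tpermK y (p x).
exists (tperm y (p x) \o p \o tperm y (p x)); first exact: fpf_involution_conj.
split=> [|z zy zpx pzy pzpx] /=.
  by rewrite (tpermD _ (p_neq x)) 1?eq_sym // tpermR.
by rewrite ![tperm _ _ _]tpermD // eq_sym.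
Qed.

Lemma fpf_involution_pairs (T : finType) (p0 : T -> T) (a b c d : T) :
  fpf_involution p0 -> a != b -> a != c -> a != d -> b != c -> b != d -> c != d ->
  exists2 p, fpf_involution p & p a = b /\ p c = d.
Proof.
move=> p0_inv ab ac ad bc bd cd.
have [p1 p1_inv [p1c _]] := fpf_involution_redirect p0_inv cd.
have [p p_inv [pa p_eq]] := fpf_involution_redirect p1_inv ab.
have [p1K _] := p1_inv.
have p1a_c : p1 a != c by apply: contra ad => /eqP h; rewrite -p1c -h p1K.
have p1a_d : p1 a != d by apply: contra ac => /eqP h; rewrite -(p1K c) p1c -h p1K.
exists p => //; split=> //.
by rewrite p_eq ?p1c // eq_sym.
Qed.

Lemma disjoint_set2 (T : finType) (x y : T) (A : {set T}) :
  [disjoint [set x; y] & A] = (x \notin A) && (y \notin A).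
Proof. by rewrite disjoints_subset subUset !sub1set !inE. Qed.

Lemma exists_fpf_involution n : ~~ odd n -> exists p : 'I_n -> 'I_n, fpf_involution p.
Proof.
case: n => [_|m /= /negPn m_odd]; first by exists id; split; case.
pose f k := if odd k then k.-1 else k.+1.
have f_lt k : (k < m.+1 -> f k < m.+1)%N.
  rewrite /f; case: ifP => [_|k_even]; first exact: leq_ltn_trans (leq_pred k).
  move=> k_lt; rewrite ltnS ltn_neqAle -ltnS k_lt andbT.
  by apply: contraFneq k_even => ->.
have fK : involutive f by case=> [|k] //; rewrite /f /=; case k_odd: (odd k); rewrite /= ?k_odd.
have f_neq k : f k != k.
  by rewrite /f; case: ifP => [|_]; [case: k => [|k] // _; rewrite ltn_eqF | rewrite gtn_eqF].
pose p (v : 'I_m.+1) : 'I_m.+1 := inord (f v).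
have pE v : p v = f v :> nat by rewrite inordK ?f_lt.
by exists p; split=> v; [apply: val_inj; rewrite /= !pE fK | rewrite -val_eqE /= pE].
Qed.

Section Matchings.
Variable n : nat.
Implicit Types (p q : 'I_n -> 'I_n) (a b c d v : 'I_n) (e : edge n).

Lemma exists_edge a b : a != b -> exists e : edge n, val e = [set a; b].
Proof.
move=> ab; have card2 : #|[set a; b]| == 2%N by rewrite cards2 ab.
by exists (exist (fun e : {set _} => #|e| == 2%N) _ card2).
Qed.

Definition matching_of p : {set edge n} := [set e | [exists v, val e == [set v; p v]]].

Lemma matching_ofP p e : reflect (exists v, val e = [set v; p v]) (e \in matching_of p).
Proof. by rewrite inE; apply: (iffP existsP) => -[v /eqP]; exists v. Qed.

Lemma perfect_matching_of p : fpf_involution p -> perfect_matching (matching_of p).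
Proof.
move=> [pK p_neq]; apply/forallP => v.
have [ev evE] : exists ev : edge n, val ev = [set v; p v].
  by apply: exists_edge; rewrite eq_sym.
suff -> : [set e in matching_of p | v \in val e] = [set ev] by rewrite cards1.
apply/setP => e; rewrite [e \in [set _ in _ | _]]inE in_set1.
apply/andP/eqP => [[/matching_ofP [u eE] ve]|->].
  apply: val_inj; rewrite evE eE.
  by move: ve; rewrite eE !inE => /orP [] /eqP -> //; rewrite pK setUC.
by split; [apply/matching_ofP; exists v; rewrite evE setUC | rewrite evE !inE eqxx].
Qed.

Lemma matching_of_agree (S : {set 'I_n}) p q :
  (forall v, v \notin S -> p v = q v) ->
  forall e, [disjoint val e & S] -> (e \in matching_of p) = (e \in matching_of q).
Proof.
move=> pq e eS.
suff sub : forall p' q', (forall v, v \notin S -> p' v = q' v) ->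
    e \in matching_of p' -> e \in matching_of q'.
  by apply/idP/idP; apply: sub => // v /pq.
move=> p' q' p'q' /matching_ofP [v eE]; apply/matching_ofP; exists v.
by move: eS; rewrite eE disjoint_set2 => /andP [/p'q' <-].
Qed.

Lemma matching_of_meet p a b c d eab ecd :
  fpf_involution p -> p a = b -> p c = d ->
  val eab = [set a; b] -> val ecd = [set c; d] ->
  forall e, (e \in matching_of p) && ~~ [disjoint val e & [set a; b; c; d]] =
            (e \in [set eab; ecd]).
Proof.
move=> [pK _] pa pc eabE ecdE e; set S := [set a; b; c; d].
have pb : p b = a by rewrite -pa pK.
have pd : p d = c by rewrite -pc pK.
have pair_in_S u : u \in S -> [set u; p u] = val eab \/ [set u; p u] = val ecd.
  rewrite eabE ecdE !inE -!orbA => /or4P [] /eqP ->; rewrite ?pa ?pb ?pc ?pd;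
    by [left | left; rewrite setUC | right | right; rewrite setUC].
apply/andP/set2P => [[/matching_ofP [v eE]]|].
  rewrite eE disjoint_set2 negb_and !negbK => /orP [/pair_in_S|/pair_in_S].
    by rewrite -eE => -[] /val_inj ->; [left | right].
  by rewrite pK setUC -eE => -[] /val_inj ->; [left | right].
have eab_in : eab \in matching_of p by apply/matching_ofP; exists a; rewrite pa.
have ecd_in : ecd \in matching_of p by apply/matching_ofP; exists c; rewrite pc.
by case=> ->; split=> //; rewrite ?eabE ?ecdE disjoint_set2 !inE eqxx ?orbT.
Qed.

End Matchings.

Section FourPoint.
Variables (R : comPzRingType) (n : nat) (r : edge n -> R).

Lemma prod_matching_of_split p (a b c d : 'I_n) (eab ecd : edge n) :
  fpf_involution p -> p a = b -> p c = d -> a != c -> a != d ->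
  val eab = [set a; b] -> val ecd = [set c; d] ->
  \prod_(e in matching_of p) r e =
    r eab * r ecd * \prod_(e in matching_of p | [disjoint val e & [set a; b; c; d]]) r e.
Proof.
move=> p_inv pa pc ac ad eabE ecdE.
have eab_ecd : eab \notin [set ecd].
  rewrite inE; apply: contraTneq (_ : a \in val eab) => [->|]; last by rewrite eabE !inE eqxx.
  by rewrite ecdE !inE negb_or ac ad.
rewrite (bigID (fun e : edge n => [disjoint val e & [set a; b; c; d]])) /= mulrC; congr (_ * _).
by rewrite (eq_bigl _ _ (matching_of_meet p_inv pa pc eabE ecdE)) big_setU1 //= big_set1.
Qed.

(* The value on the diagonal, where there is no edge, is irrelevant. *)
Definition edge_weight (a b : 'I_n) : R :=
  if [pick e : edge n | val e == [set a; b]] is Some e then r e else 1.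

Lemma edge_weightE (a b : 'I_n) (e : edge n) : val e = [set a; b] -> edge_weight a b = r e.
Proof.
move=> eE; rewrite /edge_weight; case: pickP => [e' /eqP e'E|/(_ e)]; last by rewrite eE eqxx.
by congr r; apply: val_inj; rewrite e'E eE.
Qed.

Lemma edge_weightC (a b : 'I_n) : edge_weight a b = edge_weight b a.
Proof. by rewrite /edge_weight setUC. Qed.

Hypotheses (n_even : ~~ odd n)
  (r_matching : forall M, perfect_matching M -> \prod_(e in M) r e = 1).

Lemma matching_four_point (a b c d : 'I_n) (eab ecd eac ebd : edge n) :
  a != b -> a != c -> a != d -> b != c -> b != d -> c != d ->
  val eab = [set a; b] -> val ecd = [set c; d] ->
  val eac = [set a; c] -> val ebd = [set b; d] ->
  r eab * r ecd = r eac * r ebd.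
Proof.
move=> ab ac ad bc bd cd eabE ecdE eacE ebdE.
have [p0 p0_inv] := exists_fpf_involution n_even.
have [p p_inv [pa pc]] := fpf_involution_pairs p0_inv ab ac ad bc bd cd.
have [pK _] := p_inv; have p_inj := inv_inj pK.
pose q := tperm b c \o p \o tperm b c.
have q_inv : fpf_involution q := fpf_involution_conj (tpermK b c) (tpermK b c) p_inv.
have qa : q a = c by rewrite /q /= [tperm b c a]tpermD 1?eq_sym // pa tpermL.
have qb : q b = d by rewrite /q /= tpermL pc tpermD // eq_sym.
set S := [set a; b; c; d].
have S_eq : [set a; c; b; d] = S by apply/setP => v; rewrite !inE (orbAC (v == a)).
have pq v : v \notin S -> p v = q v.
  rewrite !inE -!orbA !negb_or => /and4P [va vb vc vd].
  rewrite /q /= [tperm b c v]tpermD 1?eq_sym // tpermD //.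
    by rewrite -pa (inj_eq p_inj) eq_sym.
  by rewrite -[c]pK pc (inj_eq p_inj) eq_sym.
have same_rest : \prod_(e in matching_of q | [disjoint val e & S]) r e =
                 \prod_(e in matching_of p | [disjoint val e & S]) r e.
  apply: eq_bigl => e; case eS: [disjoint _ & _]; rewrite ?andbF // !andbT.
  by rewrite (matching_of_agree pq eS).
have := r_matching (perfect_matching_of p_inv).
rewrite (prod_matching_of_split p_inv pa pc ac ad eabE ecdE) => p_prod.
have := r_matching (perfect_matching_of q_inv).
rewrite (prod_matching_of_split q_inv qa qb ab ad eacE ebdE) S_eq same_rest => q_prod.
by rewrite -[LHS]mulr1 -q_prod mulrCA p_prod mulr1.
Qed.

Lemma edge_weight_four_point (a b c d : 'I_n) :
  a != b -> a != c -> a != d -> b != c -> b != d -> c != d ->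
  edge_weight a b * edge_weight c d = edge_weight a c * edge_weight b d.
Proof.
move=> ab ac ad bc bd cd.
have [[eab eabE] [ecd ecdE]] := (exists_edge ab, exists_edge cd).
have [[eac eacE] [ebd ebdE]] := (exists_edge ac, exists_edge bd).
rewrite (edge_weightE eabE) (edge_weightE ecdE) (edge_weightE eacE) (edge_weightE ebdE).
exact: matching_four_point ab ac ad bc bd cd eabE ecdE eacE ebdE.
Qed.

End FourPoint.

Lemma edge_weight_gt0 (R : numDomainType) n (r : edge n -> R) :
  (forall e, 0 < r e) -> forall a b, 0 < edge_weight r a b.
Proof. by move=> r_gt0 a b; rewrite /edge_weight; case: pickP. Qed.

Section RankOneFactorization.
Variables (R : rcfType) (T : finType) (w : T -> T -> R).
Hypotheses (T_gt2 : (2 < #|T|)%N) (w_gt0 : forall a b, a != b -> 0 < w a b)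
  (w_sym : forall a b, w a b = w b a)
  (w_four_point : forall a b c d, a != b -> a != c -> a != d -> b != c -> b != d -> c != d ->
     w a b * w c d = w a c * w b d).

Lemma exists_third (a b : T) : exists u, (u != a) && (u != b).
Proof.
have : (0 < #|~: [set a; b]|)%N.
  by move: T_gt2; rewrite -(cardsC [set a; b]) cards2; case: (a != b); lia.
by case/card_gt0P => u; rewrite !inE negb_or; exists u.
Qed.

Definition vertex_ratio v u u' := w v u * w v u' / w u u'.

Lemma vertex_ratioC v u u' : vertex_ratio v u u' = vertex_ratio v u' u.
Proof. by rewrite /vertex_ratio [w v u * _]mulrC [w u u']w_sym. Qed.

Lemma vertex_ratio_exchange v u u' t : v != u -> v != u' -> v != t -> u != u' -> u != t ->
  vertex_ratio v u u' = vertex_ratio v u t.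
Proof.
move=> vu vu' vt uu' ut; have [<-//|u't] := eqVneq u' t.
rewrite /vertex_ratio -!mulrA; congr (_ * _); apply/eqP.
rewrite eqr_div ?lt0r_neq0 ?w_gt0 //; apply/eqP.
by rewrite [w u t]w_sym [w u u']w_sym w_four_point // eq_sym.
Qed.

Lemma vertex_ratio_indep v u u' t t' : v != u -> v != u' -> u != u' ->
  v != t -> v != t' -> t != t' -> vertex_ratio v u u' = vertex_ratio v t t'.
Proof.
move=> vu vu' uu' vt vt' tt'; have [ut|ut] := eqVneq u t.
  by subst u; apply: vertex_ratio_exchange.
rewrite (vertex_ratio_exchange vu vu' vt uu' ut) vertex_ratioC.
by apply: vertex_ratio_exchange; rewrite // eq_sym.
Qed.

Lemma vertex_ratio_gt0 v u u' : v != u -> v != u' -> u != u' -> 0 < vertex_ratio v u u'.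
Proof. by move=> vu vu' uu'; rewrite divr_gt0 ?mulr_gt0 ?w_gt0. Qed.

Lemma vertex_ratioM a b u : a != b -> u != a -> u != b ->
  vertex_ratio a b u * vertex_ratio b a u = w a b ^+ 2.
Proof.
move=> ab ua ub; rewrite /vertex_ratio [w b a]w_sym.
have wau : w a u != 0 by rewrite lt0r_neq0 // w_gt0 // eq_sym.
have wbu : w b u != 0 by rewrite lt0r_neq0 // w_gt0 // eq_sym.
by field; rewrite wau wbu.
Qed.

Lemma rank_one_factorization :
  exists lam : {ffun T -> R}, (forall v, 0 < lam v) /\
    forall a b, a != b -> w a b = lam a * lam b.
Proof.
have /fin_all_exists [f fP] v : exists uu : T * T, [&& uu.1 != v, uu.2 != v & uu.1 != uu.2].
  have [u /andP [uv _]] := exists_third v v; have [u' /andP [u'v u'u]] := exists_third v u.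
  by exists (u, u'); rewrite /= uv u'v eq_sym u'u.
pose lam := [ffun v => Num.sqrt (vertex_ratio v (f v).1 (f v).2)].
have lamE v u u' : v != u -> v != u' -> u != u' -> lam v = Num.sqrt (vertex_ratio v u u').
  move=> vu vu' uu'; have /and3P [fv1 fv2 f12] := fP v.
  by rewrite ffunE (vertex_ratio_indep _ _ f12 vu vu') // eq_sym.
exists lam; split=> [v|a b ab].
  have /and3P [fv1 fv2 f12] := fP v.
  by rewrite ffunE sqrtr_gt0 vertex_ratio_gt0 // eq_sym.
have [u /andP [ua ub]] := exists_third a b.
have [ba au bu] : [/\ b != a, a != u & b != u] by rewrite ![_ == u]eq_sym eq_sym.
rewrite (lamE a b u) // (lamE b a u) // -sqrtrM.
  by rewrite vertex_ratioM // sqrtr_sqr gtr0_norm // w_gt0.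
by rewrite ltW // vertex_ratio_gt0.
Qed.

End RankOneFactorization.

Theorem theorem4p4 (R : realType) (n : nat) (hn4 : (4 <= n)%N) (hev : ~~ odd n)
  (D : {ffun edge n -> R} -> Prop)
  (hD : forall x, D x -> posvec x)
  (hinv : gamma_invariant D) :
  phi_fiber_invariant D.
Proof.
move=> x x' Dx x'_gt0 same_xM; have x_gt0 := hD x Dx.
pose r e := x' e / x e.
have r_gt0 e : 0 < r e by rewrite divr_gt0.
have r_matching M : perfect_matching M -> \prod_(e in M) r e = 1.
  move=> /same_xM; rewrite /r prodf_div /xM => ->.
  by rewrite divff // gt_eqF // prodr_gt0.
have n_gt2 : (2 < #|'I_n|)%N by rewrite card_ord; apply: leq_trans hn4.
have [lam [lam_gt0 lamE]] := rank_one_factorization n_gt2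
  (fun a b _ => edge_weight_gt0 r_gt0 a b) (edge_weightC r) (edge_weight_four_point hev r_matching).
suff -> : x' = gact lam x by apply: hinv.
apply/ffunP => e; have /cards2P [a [b [ab eE]]] := valP e.
rewrite ffunE eE big_setU1 ?inE //= big_set1 -lamE // (edge_weightE r eE).
by rewrite divfK ?lt0r_neq0.
Qed.
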